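(* Let $\omega\in(0,1/2)$ and $\tau>0$. Suppose the test statistic $z$ satisfies $z\mid\lambda\sim\mathrm{N}(\lambda,1)$, with $\lambda\sim(1-\omega)\delta_0+\omega\,\mathrm{J}(\tau^2)$ under $\mathrm{H}_0$ and $\lambda\sim\omega\delta_0+(1-\omega)\mathrm{J}(\tau^2)$ under $\mathrm{H}_1$. Then the Bayes factor in favor of $\mathrm{H}_1$ is $$\mathrm{BF}^t_{10}(z\mid\tau^2,\omega)=\frac{\omega+(1-\omega)R}{(1-\omega)+\omega R},$$ where $R=m_1(z\mid\tau^2)/m_0(z)$, with $m_0(z)$ the $\mathrm{N}(0,1)$ density at $z$ and $m_1(z\mid\tau^2)=\int \phi(z-\lambda)\,\mathrm{J}(\lambda;\tau^2)\,d\lambda$, and $$R=(1+\tau^2)^{-3/2}\,{}_1F_1\!\left(\tfrac32,\tfrac12;\ \frac{\tau^2z^2}{2(1+\tau^2)}\right).$$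
   Context: $\delta_0$ is the point mass at $0$. $\mathrm{J}(\tau^2)$ is the normal-moment density of order 1: $\mathrm{J}(\lambda;\tau^2)=\frac{\lambda^2}{(2\tau^2)^{3/2}\Gamma(3/2)}\exp\!\big(-\frac{\lambda^2}{2\tau^2}\big)$, $\lambda\in\mathbb{R}$. $\phi$ is the standard normal density. ${}_1F_1(a,b;x)=\sum_{i\ge0}\frac{(a)_i}{(b)_i\,i!}x^i$ is the confluent hypergeometric function, $(a)_i$ the rising factorial. The Bayes factor is the ratio of the marginal density of $z$ under $\mathrm{H}_1$ to that under $\mathrm{H}_0$. *)

From Stdlib Require Import Reals.
From Coquelicot Require Import Coquelicot.
Open Scope R_scope.

Definition phi (x : R) : R := exp (- x ^ 2 / 2) / sqrt (2 * PI).

Definition Gamma (s : R) : R :=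
  RInt_gen (fun t => Rpower t (s - 1) * exp (- t)) (at_right 0) (Rbar_locally p_infty).

Definition Jdens (tau2 lam : R) : R :=
  lam ^ 2 / (Rpower (2 * tau2) (3 / 2) * Gamma (3 / 2)) * exp (- lam ^ 2 / (2 * tau2)).

Definition m0 (z : R) : R := phi z.

Definition m1 (tau2 z : R) : R :=
  RInt_gen (fun lam => phi (z - lam) * Jdens tau2 lam)
    (Rbar_locally m_infty) (Rbar_locally p_infty).

Fixpoint rising (a : R) (i : nat) : R :=
  match i with
  | O => 1
  | S k => rising a k * (a + INR k)
  end.

Definition hyp1F1 (a b x : R) : R :=
  Series (fun i => rising a i / (rising b i * INR (Stdlib.Arith.Factorial.fact i)) * x ^ i).

(* Marginal density of z when lambda ~ p0 delta_0 + (1 - p0) J(tau2), by linearity of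
   the integral against the mixture prior. *)
Definition mix_marginal (p0 tau2 z : R) : R :=
  p0 * m0 z + (1 - p0) * m1 tau2 z.

Definition BF10 (tau2 omega z : R) : R :=
  mix_marginal omega tau2 z / mix_marginal (1 - omega) tau2 z.

From Stdlib Require Import Reals Lra Classical.
From Coquelicot Require Import Coquelicot.
Open Scope R_scope.

(* Completing the square in  phi (z - l) * J(l; tau2)  leaves  l^2  times a Gaussian
   kernel in  l  with mean  z tau2 / (1 + tau2)  and variance  tau2 / (1 + tau2),  whose
   second moment is computed with the explicit primitive of  (a + b w + c w^2) e^(-w^2/2).
   The same primitive, after the substitution  t = w^2 / 2,  evaluates Gamma(3/2).  Both
   results are multiples of  G = int_0^oo e^(-w^2/2) dw.  Finally  1F1(a + 1, a; x) = e^x (1 + x / a),  termwise from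
   (a + 1)_i / (a)_i = (a + i) / a. *)

Lemma ex_finite_lim_incr (f : R -> R) (M : R) :
  (forall x y, x <= y -> f x <= f y) -> (forall x, f x <= M) ->
  ex_finite_lim f p_infty.
Proof.
  intros f_incr f_le.
  destruct (completeness (fun y => exists x, y = f x)) as [L [L_ub L_least]].
  - exists M; intros y [x ->]; apply f_le.
  - exists (f 0), 0; reflexivity.
  - exists L; apply is_lim_spec; intros eps.
    assert (Hx0 : exists x0, L - eps < f x0).
    { apply NNPP; intros Hno.
      assert (L <= L - eps) by
        (apply L_least; intros y [x ->]; apply Rnot_lt_le; eauto).
      destruct eps; simpl in *; lra. }
    destruct Hx0 as [x0 Hx0]; exists x0; intros x Hx.
    assert (f x <= L) by (apply L_ub; eauto).
    assert (f x0 <= f x) by (apply f_incr; lra).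
    apply Rabs_def1; lra.
Qed.

Lemma is_lim_m_infty_reflect (f : R -> R) (l : Rbar) :
  is_lim (fun y => f (- y)) p_infty l -> is_lim f m_infty l.
Proof.
  intros Hl.
  apply (is_lim_ext (fun y => f (- - y))); [intros y; rewrite Ropp_involutive; reflexivity|].
  apply (is_lim_comp (fun y => f (- y)) Ropp m_infty l p_infty Hl).
  - apply (is_lim_opp (fun y => y) m_infty m_infty), is_lim_id.
  - exists 0; intros y _ Habs; discriminate.
Qed.

Lemma is_lim_comp_affine (f : R -> R) (mu s : R) (x l : Rbar) :
  0 < s -> (x = p_infty \/ x = m_infty) -> is_lim f x l ->
  is_lim (fun y => f ((y - mu) / s)) x l.
Proof.
  intros Hs Hx Hf.
  apply (is_lim_ext (fun y => f (/ s * y + - mu / s))); [intros; f_equal; field; lra|].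
  apply is_lim_comp_lin; [| apply Rinv_neq_0_compat; lra].
  replace (Rbar_plus (Rbar_mult (/ s) x) (- mu / s)) with x; [exact Hf|].
  pose proof (Rinv_0_lt_compat s Hs).
  destruct Hx as [-> | ->]; simpl; unfold Rbar_mult'; destruct Rle_dec; try lra; simpl;
    destruct Rle_lt_or_eq_dec; try lra; reflexivity.
Qed.

Lemma is_RInt_gen_derive {Fa Fb : (R -> Prop) -> Prop} {FFa : Filter Fa} {FFb : Filter Fb}
  (D : R -> Prop) (f f' : R -> R) (la lb : R) :
  open D ->
  (forall x, D x -> is_derive f x (f' x)) ->
  (forall x, D x -> continuous f' x) ->
  filter_prod Fa Fb
    (fun ab => forall x, Rmin (fst ab) (snd ab) <= x <= Rmax (fst ab) (snd ab) -> D x) ->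
  filterlim f Fa (locally la) -> filterlim f Fb (locally lb) ->
  is_RInt_gen f' Fa Fb (lb - la).
Proof.
  intros D_open f_deriv f'_cont D_between f_la f_lb.
  assert (Derive_eq : forall x, D x -> Derive f x = f' x).
  { intros x Dx; apply is_derive_unique, f_deriv, Dx. }
  apply (is_RInt_gen_ext (Derive f)).
  - eapply filter_imp; [|exact D_between]; intros [a b] Hab x Hx.
    apply Derive_eq, Hab; simpl in *; lra.
  - apply is_RInt_gen_Derive; [| | exact f_la | exact f_lb];
      eapply filter_imp; try exact D_between; intros [a b] Hab x Hx.
    + eexists; apply f_deriv, Hab, Hx.
    + apply (continuous_ext_loc _ f'); [|apply f'_cont, Hab, Hx].
      eapply filter_imp; [|apply D_open, Hab, Hx].
      intros y Dy; symmetry; apply Derive_eq, Dy.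
Qed.

Definition gauss (u : R) : R := exp (- u ^ 2 / 2).

Definition gauss_int (x : R) : R := RInt gauss 0 x.

Lemma gauss_pos u : 0 < gauss u.
Proof. apply exp_pos. Qed.

Lemma gauss_opp u : gauss (- u) = gauss u.
Proof. unfold gauss; replace ((- u) ^ 2) with (u ^ 2) by ring; reflexivity. Qed.

Lemma is_derive_gauss u : is_derive gauss u (- u * gauss u).
Proof.
  unfold gauss; auto_derive; [easy|].
  replace (- (u * (u * 1)) * / 2) with (- u ^ 2 / 2) by (unfold Rdiv; ring); field.
Qed.

Lemma continuous_gauss u : continuous gauss u.
Proof.
  apply (ex_derive_continuous (V := R_NormedModule)); eexists; apply is_derive_gauss.
Qed.

Lemma ex_RInt_gauss a b : ex_RInt gauss a b.
Proof.
  apply (ex_RInt_continuous (V := R_CompleteNormedModule)); intros; apply continuous_gauss.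
Qed.

Lemma is_derive_gauss_int x : is_derive gauss_int x (gauss x).
Proof.
  apply (is_derive_RInt gauss gauss_int 0 x).
  - apply filter_forall; intros y.
    apply (RInt_correct (V := R_CompleteNormedModule)), ex_RInt_gauss.
  - apply continuous_gauss.
Qed.

Lemma gauss_int_0 : gauss_int 0 = 0.
Proof. apply (RInt_point (V := R_CompleteNormedModule)). Qed.

Lemma gauss_int_incr x y : x <= y -> gauss_int x <= gauss_int y.
Proof.
  intros Hxy; unfold gauss_int.
  rewrite <- (RInt_Chasles gauss 0 x y) by apply ex_RInt_gauss.
  assert (0 <= RInt gauss x y).
  { apply RInt_ge_0; [exact Hxy | apply ex_RInt_gauss | intros; left; apply gauss_pos]. }
  change (plus ?a ?b) with (a + b); lra.
Qed.

Lemma gauss_int_opp x : gauss_int (- x) = - gauss_int x.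
Proof.
  unfold gauss_int.
  assert (Hlin := RInt_comp_lin gauss (-1) 0 0 x (ex_RInt_gauss _ _)).
  replace (-1 * 0 + 0) with 0 in Hlin by ring; replace (-1 * x + 0) with (- x) in Hlin by ring.
  rewrite <- Hlin, <- (RInt_opp (V := R_CompleteNormedModule)) by apply ex_RInt_gauss.
  apply RInt_ext; intros y _.
  change (scal ?a ?b) with (a * b); change (opp ?a) with (- a).
  replace (-1 * y + 0) with (- y) by ring; rewrite gauss_opp; lra.
Qed.

Lemma gauss_int_le x : gauss_int x <= exp (1 / 2).
Proof.
  destruct (Rle_or_lt x 0) as [Hx | Hx].
  { apply Rle_trans with (gauss_int 0); [now apply gauss_int_incr|].
    rewrite gauss_int_0; left; apply exp_pos. }
  assert (Hmaj : is_RInt (fun u => exp (1 / 2 - u)) 0 x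
                   (minus (- exp (1 / 2 - x)) (- exp (1 / 2 - 0)))).
  { apply (is_RInt_derive (fun u => - exp (1 / 2 - u))).
    - intros; auto_derive; [easy | unfold Rminus; ring].
    - intros; apply (ex_derive_continuous (V := R_NormedModule)); auto_derive; easy. }
  change (minus ?a ?b) with (a - b) in Hmaj; rewrite Rminus_0_r in Hmaj.
  apply Rle_trans with (RInt (fun u => exp (1 / 2 - u)) 0 x).
  - apply RInt_le; [lra | apply ex_RInt_gauss | eexists; exact Hmaj |].
    intros u _; unfold gauss.
    assert (Hexp : - u ^ 2 / 2 <= 1 / 2 - u) by (assert (0 <= (u - 1) ^ 2) by apply pow2_ge_0; lra).
    destruct Hexp as [Hexp | ->]; [left; apply exp_increasing, Hexp | right; reflexivity].
  - rewrite (is_RInt_unique _ _ _ _ Hmaj); pose proof (exp_pos (1 / 2 - x)); lra.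
Qed.

Definition gauss_int_infty : R := real (Lim gauss_int p_infty).

Lemma is_lim_gauss_int_p : is_lim gauss_int p_infty gauss_int_infty.
Proof.
  apply Lim_correct', (ex_finite_lim_incr _ (exp (1 / 2)));
    [exact gauss_int_incr | exact gauss_int_le].
Qed.

Lemma is_lim_gauss_int_m : is_lim gauss_int m_infty (- gauss_int_infty).
Proof.
  apply is_lim_m_infty_reflect.
  apply (is_lim_ext (fun y => - gauss_int y)); [intros; rewrite gauss_int_opp; reflexivity|].
  apply (is_lim_opp gauss_int p_infty gauss_int_infty), is_lim_gauss_int_p.
Qed.

Lemma gauss_int_infty_pos : 0 < gauss_int_infty.
Proof.
  apply Rlt_le_trans with (gauss_int 1).
  - apply RInt_gt_0; [lra | intros; apply gauss_pos | intros; apply continuous_gauss].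
  - apply (is_lim_le_loc (fun _ => gauss_int 1) gauss_int p_infty (gauss_int 1) gauss_int_infty).
    + exists 1; intros y Hy; apply gauss_int_incr; lra.
    + apply is_lim_const.
    + apply is_lim_gauss_int_p.
Qed.

Lemma sq_mul_gauss_le u : u ^ 2 * gauss u <= 2.
Proof.
  assert (Hinv : gauss u * exp (u ^ 2 / 2) = 1).
  { unfold gauss; rewrite <- exp_plus, <- exp_0; f_equal; field. }
  pose proof (exp_ineq1_le (u ^ 2 / 2)); pose proof (gauss_pos u); pose proof (pow2_ge_0 u).
  nra.
Qed.

Lemma is_lim_dominated_mul_gauss (f : R -> R) :
  (forall u, 1 <= u -> 0 <= f u <= u * gauss u) -> is_lim f p_infty 0.
Proof.
  intros Hf.
  assert (Hinv : is_lim (fun u => 2 * / u) p_infty 0).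
  { replace (Finite 0) with (Rbar_mult 2 (Rbar_inv p_infty)) by (simpl; f_equal; ring).
    apply is_lim_scal_l, is_lim_inv; [apply is_lim_id | discriminate]. }
  apply (is_lim_le_le_loc (fun _ => 0) (fun u => 2 * / u)); [| apply is_lim_const | exact Hinv].
  exists 1; intros u Hu; split; [apply Hf; lra|].
  apply Rle_trans with (u * gauss u); [apply Hf; lra|].
  pose proof (sq_mul_gauss_le u).
  apply (Rmult_le_reg_l u); [lra|].
  replace (u * (2 * / u)) with 2 by (field; lra); nra.
Qed.

Lemma is_lim_lin_mul_gauss_p b c : is_lim (fun w => (b + c * w) * gauss w) p_infty 0.
Proof.
  apply (is_lim_ext (fun w => b * gauss w + c * (w * gauss w))); [intros; ring|].
  replace (Finite 0) with (Finite (b * 0 + c * 0)) by (f_equal; ring).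
  apply is_lim_plus'; apply (is_lim_scal_l _ _ p_infty 0), is_lim_dominated_mul_gauss;
    intros u Hu; pose proof (gauss_pos u); split; nra.
Qed.

Lemma is_lim_lin_mul_gauss_m b c : is_lim (fun w => (b + c * w) * gauss w) m_infty 0.
Proof.
  apply is_lim_m_infty_reflect.
  apply (is_lim_ext (fun w => (b + - c * w) * gauss w)); [intros; rewrite gauss_opp; ring|].
  apply is_lim_lin_mul_gauss_p.
Qed.

Definition quad_gauss_prim (a b c w : R) : R :=
  (a + c) * gauss_int w - (b + c * w) * gauss w.

Lemma is_derive_quad_gauss_prim a b c w :
  is_derive (quad_gauss_prim a b c) w ((a + b * w + c * w ^ 2) * gauss w).
Proof.
  unfold quad_gauss_prim.
  auto_derive.
  - split; [eexists; apply is_derive_gauss_int | split; [eexists; apply is_derive_gauss | easy]].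
  - erewrite (is_derive_unique _ w), (is_derive_unique _ w);
      [| apply is_derive_gauss | apply is_derive_gauss_int]; ring.
Qed.

Lemma is_lim_quad_gauss_prim_p a b c :
  is_lim (quad_gauss_prim a b c) p_infty ((a + c) * gauss_int_infty).
Proof.
  replace ((a + c) * gauss_int_infty) with ((a + c) * gauss_int_infty - 0) by ring.
  apply is_lim_minus'; [apply (is_lim_scal_l _ _ _ gauss_int_infty), is_lim_gauss_int_p|].
  apply is_lim_lin_mul_gauss_p.
Qed.

Lemma is_lim_quad_gauss_prim_m a b c :
  is_lim (quad_gauss_prim a b c) m_infty (- ((a + c) * gauss_int_infty)).
Proof.
  replace (- ((a + c) * gauss_int_infty)) with ((a + c) * - gauss_int_infty - 0) by ring.
  apply is_lim_minus'; [apply (is_lim_scal_l _ _ _ (- gauss_int_infty)), is_lim_gauss_int_m|].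
  apply is_lim_lin_mul_gauss_m.
Qed.

Lemma is_RInt_gen_sq_mul_gauss_affine mu s : 0 < s ->
  is_RInt_gen (fun l => l ^ 2 * gauss ((l - mu) / s))
    (Rbar_locally m_infty) (Rbar_locally p_infty) (2 * (mu ^ 2 + s ^ 2) * s * gauss_int_infty).
Proof.
  intros Hs.
  set (P := quad_gauss_prim (mu ^ 2) (2 * mu * s) (s ^ 2)).
  replace (2 * (mu ^ 2 + s ^ 2) * s * gauss_int_infty)
    with (s * ((mu ^ 2 + s ^ 2) * gauss_int_infty)
          - s * - ((mu ^ 2 + s ^ 2) * gauss_int_infty)) by ring.
  apply (is_RInt_gen_derive (fun _ => True) (fun l => s * P ((l - mu) / s))).
  - apply open_true.
  - intros l _.
    set (w := (l - mu) / s).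
    replace (l ^ 2 * gauss w)
      with (s * (/ s * ((mu ^ 2 + 2 * mu * s * w + s ^ 2 * w ^ 2) * gauss w)))
      by (unfold w; field; lra).
    apply is_derive_scal, (is_derive_comp P); [apply is_derive_quad_gauss_prim|].
    auto_derive; [easy | field; lra].
  - intros l _; apply (ex_derive_continuous (V := R_NormedModule)).
    unfold gauss; auto_derive; easy.
  - apply filter_forall; easy.
  - apply (is_lim_scal_l _ s m_infty (- ((mu ^ 2 + s ^ 2) * gauss_int_infty))).
    apply is_lim_comp_affine; [exact Hs | now right | apply is_lim_quad_gauss_prim_m].
  - apply (is_lim_scal_l _ s p_infty ((mu ^ 2 + s ^ 2) * gauss_int_infty)).
    apply is_lim_comp_affine; [exact Hs | now left | apply is_lim_quad_gauss_prim_p].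
Qed.

Lemma filter_prod_at_right_0_p_infty_pos :
  filter_prod (at_right 0) (Rbar_locally p_infty)
    (fun ab => forall x, Rmin (fst ab) (snd ab) <= x <= Rmax (fst ab) (snd ab) -> 0 < x).
Proof.
  apply (Filter_prod _ _ _ (fun a => 0 < a) (fun b => 0 < b)).
  - exists (mkposreal 1 Rlt_0_1); intros y _ Hy; exact Hy.
  - exists 0; auto.
  - intros a b Ha Hb x Hx; simpl in Hx.
    apply Rlt_le_trans with (Rmin a b); [apply Rmin_glb_lt|]; lra.
Qed.

Lemma gauss_sqrt_double t : 0 <= t -> gauss (sqrt (2 * t)) = exp (- t).
Proof. intros Ht; unfold gauss; rewrite pow2_sqrt by lra; f_equal; field. Qed.

Lemma is_RInt_gen_sqrt_mul_exp :
  is_RInt_gen (fun t => sqrt t * exp (- t)) (at_right 0) (Rbar_locally p_infty)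
    (gauss_int_infty / sqrt 2).
Proof.
  assert (Hsqrt2 : 0 < sqrt 2) by (apply sqrt_lt_R0; lra).
  set (P := quad_gauss_prim 0 0 1).
  set (F := fun t => / sqrt 2 * P (sqrt (2 * t))).
  replace (gauss_int_infty / sqrt 2) with (/ sqrt 2 * ((0 + 1) * gauss_int_infty) - F 0)
    by (unfold F, P, quad_gauss_prim; rewrite Rmult_0_r, sqrt_0, gauss_int_0; field; lra).
  apply (is_RInt_gen_derive (fun t => 0 < t) F).
  - apply open_gt.
  - intros t Ht.
    set (w := sqrt (2 * t)).
    assert (Hw : 0 < w) by (apply sqrt_lt_R0; lra).
    replace (sqrt t * exp (- t))
      with (/ sqrt 2 * (2 / (2 * w) * ((0 + 0 * w + 1 * w ^ 2) * gauss w))).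
    2:{ transitivity (/ sqrt 2 * w * gauss w); [field; split; apply Rgt_not_eq; assumption|].
        unfold w; rewrite gauss_sqrt_double, sqrt_mult by lra; field; apply Rgt_not_eq, Hsqrt2. }
    apply is_derive_scal, (is_derive_comp P); [apply is_derive_quad_gauss_prim|].
    apply (is_derive_sqrt (fun t => 2 * t)); [auto_derive; [easy | ring] | lra].
  - intros t Ht; apply (ex_derive_continuous (V := R_NormedModule)).
    auto_derive; lra.
  - exact filter_prod_at_right_0_p_infty_pos.
  - apply (filterlim_filter_le_1 (F := locally 0)); [apply filter_le_within|].
    apply (continuous_comp (fun t => sqrt (2 * t)) (fun w => / sqrt 2 * P w)).
    + apply continuous_sqrt_comp, (ex_derive_continuous (V := R_NormedModule)).
      auto_derive; easy.
    + apply (ex_derive_continuous (V := R_NormedModule)).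
      eexists; apply is_derive_scal, is_derive_quad_gauss_prim.
  - apply (is_lim_scal_l _ (/ sqrt 2) p_infty ((0 + 1) * gauss_int_infty)).
    apply (is_lim_comp P _ p_infty _ p_infty); [apply is_lim_quad_gauss_prim_p | |].
    + apply is_lim_sqrt_p, (is_lim_le_p_loc (fun t => t)); [|apply is_lim_id].
      exists 0; intros; lra.
    + exists 0; intros; discriminate.
Qed.

Lemma Gamma_3_2 : Gamma (3 / 2) = gauss_int_infty / sqrt 2.
Proof.
  unfold Gamma; apply (is_RInt_gen_unique (V := R_CompleteNormedModule)).
  apply (is_RInt_gen_ext (fun t => sqrt t * exp (- t))); [|exact is_RInt_gen_sqrt_mul_exp].
  eapply filter_imp; [|exact filter_prod_at_right_0_p_infty_pos]; intros [a b] Hab x Hx.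
  replace (3 / 2 - 1) with (/ 2) by field.
  rewrite Rpower_sqrt by (apply Hab; simpl in *; lra); reflexivity.
Qed.

Lemma rising_add1 a i : rising (a + 1) i * a = rising a i * (a + INR i).
Proof.
  induction i as [|i IH]; cbn [rising]; [simpl; ring|].
  rewrite S_INR.
  transitivity (rising (a + 1) i * a * (a + 1 + INR i)); [ring|].
  rewrite IH; ring.
Qed.

Lemma rising_pos a i : 0 < a -> 0 < rising a i.
Proof.
  intros Ha; induction i as [|i IH]; cbn [rising]; [lra|].
  pose proof (pos_INR i); apply Rmult_lt_0_compat; lra.
Qed.

Lemma is_series_exp x : is_series (fun i => x ^ i / INR (Factorial.fact i)) (exp x).
Proof.
  eapply is_series_ext; [|apply (is_exp_Reals x)].
  intros n; change (scal ?a ?b) with (a * b); rewrite pow_n_pow; reflexivity.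
Qed.

Lemma is_series_nat_mul_exp x :
  is_series (fun i => INR i * (x ^ i / INR (Factorial.fact i))) (x * exp x).
Proof.
  apply is_series_decr_1.
  match goal with |- is_series _ ?l => replace l with (scal x (exp x)) end.
  - eapply is_series_ext; [|exact (is_series_scal x _ _ (is_series_exp x))].
    intros n.
    change (x * (x ^ n / INR (Factorial.fact n))
            = INR (S n) * (x ^ S n / INR (Factorial.fact (S n)))).
    rewrite fact_simpl, mult_INR, <- tech_pow_Rmult, S_INR.
    pose proof (INR_fact_neq_0 n); pose proof (pos_INR n); field; lra.
  - change (plus ?u (opp ?v)) with (u - v); change (scal ?u ?v) with (u * v); simpl; ring.
Qed.

Lemma hyp1F1_add1 a x : 0 < a -> hyp1F1 (a + 1) a x = exp x * (1 + x / a).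
Proof.
  intros Ha; unfold hyp1F1; apply is_series_unique.
  replace (exp x * (1 + x / a)) with (exp x + / a * (x * exp x)) by (field; lra).
  eapply is_series_ext; [|exact (is_series_plus _ _ _ _ (is_series_exp x)
                                   (is_series_scal (/ a) _ _ (is_series_nat_mul_exp x)))].
  intros n.
  change (x ^ n / INR (Factorial.fact n) + / a * (INR n * (x ^ n / INR (Factorial.fact n)))
          = rising (a + 1) n / (rising a n * INR (Factorial.fact n)) * x ^ n).
  pose proof (rising_pos a n Ha); pose proof (INR_fact_neq_0 n).
  replace (rising (a + 1) n) with (rising a n * (a + INR n) / a)
    by (rewrite <- rising_add1; field; lra).
  field; lra.
Qed.

Lemma hyp1F1_3_2_1_2_pos x : 0 <= x -> 0 < hyp1F1 (3 / 2) (1 / 2) x.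
Proof.
  intros Hx; replace (3 / 2) with (1 / 2 + 1) by field.
  rewrite hyp1F1_add1 by lra.
  apply Rmult_lt_0_compat; [apply exp_pos|].
  replace (x / (1 / 2)) with (2 * x) by field; lra.
Qed.

Lemma Rpower_3_2 x : 0 < x -> Rpower x (3 / 2) = x * sqrt x.
Proof.
  intros Hx; replace (3 / 2) with (1 + / 2) by field.
  rewrite Rpower_plus, Rpower_1, Rpower_sqrt by exact Hx; reflexivity.
Qed.

Lemma phi_pos x : 0 < phi x.
Proof.
  apply Rdiv_lt_0_compat; [apply exp_pos | apply sqrt_lt_R0].
  pose proof PI_RGT_0; lra.
Qed.

Lemma phi_mul_exp_complete_square tau2 z l : 0 < tau2 ->
  phi (z - l) * exp (- l ^ 2 / (2 * tau2)) =
  phi z * exp (tau2 * z ^ 2 / (2 * (1 + tau2))) *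
  gauss ((l - z * tau2 / (1 + tau2)) / sqrt (tau2 / (1 + tau2))).
Proof.
  intros Ht.
  assert (Hs2 : sqrt (tau2 / (1 + tau2)) ^ 2 = tau2 / (1 + tau2))
    by (apply pow2_sqrt, Rlt_le, Rdiv_lt_0_compat; lra).
  assert (Hs : 0 < sqrt (tau2 / (1 + tau2))) by (apply sqrt_lt_R0, Rdiv_lt_0_compat; lra).
  assert (Hexp : - (z - l) ^ 2 / 2 + - l ^ 2 / (2 * tau2) =
                 - z ^ 2 / 2 + tau2 * z ^ 2 / (2 * (1 + tau2))
                 + - ((l - z * tau2 / (1 + tau2)) / sqrt (tau2 / (1 + tau2))) ^ 2 / 2).
  { unfold Rdiv at 6; rewrite Rpow_mult_distr, pow_inv, Hs2; field; lra. }
  assert (H2PI : sqrt (2 * PI) <> 0)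
    by (apply Rgt_not_eq, sqrt_lt_R0; pose proof PI_RGT_0; lra).
  unfold phi, gauss.
  transitivity (exp (- (z - l) ^ 2 / 2 + - l ^ 2 / (2 * tau2)) / sqrt (2 * PI));
    [| rewrite Hexp]; rewrite !exp_plus; field; exact H2PI.
Qed.

Lemma is_RInt_gen_m1 tau2 z : 0 < tau2 ->
  is_RInt_gen (fun lam => phi (z - lam) * Jdens tau2 lam)
    (Rbar_locally m_infty) (Rbar_locally p_infty)
    (m0 z * (Rpower (1 + tau2) (- (3 / 2)) *
             hyp1F1 (3 / 2) (1 / 2) (tau2 * z ^ 2 / (2 * (1 + tau2))))).
Proof.
  intros Ht.
  set (x := tau2 * z ^ 2 / (2 * (1 + tau2))).
  set (mu := z * tau2 / (1 + tau2)).
  set (s := sqrt (tau2 / (1 + tau2))).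
  set (K := phi z * exp x / (Rpower (2 * tau2) (3 / 2) * Gamma (3 / 2))).
  assert (Hs : 0 < s) by (apply sqrt_lt_R0, Rdiv_lt_0_compat; lra).
  assert (Hs2 : s ^ 2 = tau2 / (1 + tau2))
    by (apply pow2_sqrt, Rlt_le, Rdiv_lt_0_compat; lra).
  assert (Hsqrt2 : 0 < sqrt 2) by (apply sqrt_lt_R0; lra).
  assert (HG : 0 < Gamma (3 / 2))
    by (rewrite Gamma_3_2; apply Rdiv_lt_0_compat; [apply gauss_int_infty_pos | exact Hsqrt2]).
  assert (HP : 0 < Rpower (2 * tau2) (3 / 2)) by apply exp_pos.
  replace (m0 z * _) with (K * (2 * (mu ^ 2 + s ^ 2) * s * gauss_int_infty)).
  - apply (is_RInt_gen_ext (fun lam => K * (lam ^ 2 * gauss ((lam - mu) / s)))).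
    + apply filter_forall; intros _ lam _.
      change (K * (lam ^ 2 * gauss ((lam - mu) / s)) = phi (z - lam) * Jdens tau2 lam).
      transitivity (phi (z - lam) * exp (- lam ^ 2 / (2 * tau2)) * lam ^ 2
                    / (Rpower (2 * tau2) (3 / 2) * Gamma (3 / 2))).
      * rewrite phi_mul_exp_complete_square by exact Ht.
        unfold K, x, mu, s; field; split; apply Rgt_not_eq; assumption.
      * unfold Jdens; field; split; apply Rgt_not_eq; assumption.
    + apply (is_RInt_gen_scal (V := R_NormedModule)), is_RInt_gen_sq_mul_gauss_affine, Hs.
  - replace (hyp1F1 (3 / 2) (1 / 2) x) with (exp x * (1 + x / (1 / 2)))
      by (rewrite <- hyp1F1_add1 by lra; f_equal; field).
    rewrite Hs2.
    unfold K, m0, s, x, mu.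
    rewrite Gamma_3_2, Rpower_Ropp, !Rpower_3_2, sqrt_div_alt, sqrt_mult by lra.
    assert (0 < sqrt tau2) by (apply sqrt_lt_R0; lra).
    assert (0 < sqrt (1 + tau2)) by (apply sqrt_lt_R0; lra).
    pose proof gauss_int_infty_pos.
    field; repeat split; apply Rgt_not_eq; (assumption || lra).
Qed.

Lemma BF10_eq_ratio tau2 omega z :
  0 < omega < 1 -> 0 < m0 z -> 0 <= m1 tau2 z ->
  BF10 tau2 omega z =
  (omega + (1 - omega) * (m1 tau2 z / m0 z)) / ((1 - omega) + omega * (m1 tau2 z / m0 z)).
Proof.
  intros Hw Hm0 Hm1; unfold BF10, mix_marginal.
  assert (0 < (1 - omega) * m0 z + (1 - (1 - omega)) * m1 tau2 z) by nra.
  field; split; lra.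
Qed.

Theorem proposition4 (omega tau2 z : R) :
  0 < omega < 1 / 2 -> 0 < tau2 ->
  ex_RInt_gen (fun lam => phi (z - lam) * Jdens tau2 lam)
    (Rbar_locally m_infty) (Rbar_locally p_infty) /\
  (let Rr := m1 tau2 z / m0 z in
   BF10 tau2 omega z = (omega + (1 - omega) * Rr) / ((1 - omega) + omega * Rr) /\
   Rr = Rpower (1 + tau2) (- (3 / 2)) *
        hyp1F1 (3 / 2) (1 / 2) (tau2 * z ^ 2 / (2 * (1 + tau2)))).
Proof.
  intros Hw Ht.
  set (R0 := Rpower (1 + tau2) (- (3 / 2)) *
             hyp1F1 (3 / 2) (1 / 2) (tau2 * z ^ 2 / (2 * (1 + tau2)))).
  pose proof (is_RInt_gen_m1 tau2 z Ht) as Hint; fold R0 in Hint.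
  assert (Hm1 : m1 tau2 z = m0 z * R0)
    by (unfold m1; apply (is_RInt_gen_unique (V := R_CompleteNormedModule)), Hint).
  assert (Hm0 : 0 < m0 z) by apply phi_pos.
  assert (HR0 : 0 < R0).
  { apply Rmult_lt_0_compat; [apply exp_pos | apply hyp1F1_3_2_1_2_pos].
    apply Rmult_le_pos; [apply Rmult_le_pos; [lra | apply pow2_ge_0] |].
    left; apply Rinv_0_lt_compat; lra. }
  clearbody R0.
  split; [eexists; exact Hint|].
  cbv zeta; split.
  - apply BF10_eq_ratio; [lra | exact Hm0 | rewrite Hm1; left; apply Rmult_lt_0_compat; assumption].
  - rewrite Hm1; field; apply Rgt_not_eq, Hm0.
Qed.
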